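(* Let $q$ be an odd prime power and let $B(q)$ be the Brown graph. Let $c$ be a quadric vertex of $B(q)$ and let $a,b$ be two distinct neighbors of $c$ in $B(q)$. Let $A=N_{B(q)}(a)\setminus N_{B(q)}(b)$ and $B=N_{B(q)}(b)\setminus N_{B(q)}(a)$, and let $M$ be the set of edges of $B(q)$ with one endpoint in $A$ and the other in $B$. Let $H$ be the graph obtained from $B(q)$ by deleting the vertex $c$ and all edges of $M$. Then $H$ is $(q-6)$-vertex-connected.
   Context: Let $\mathbb{F}_q$ be the field with $q$ elements. The Brown graph $B(q)$ has as vertices the one-dimensional subspaces of $\mathbb{F}_q^3$, i.e. the equivalence classes $[x]$ of nonzero vectors $x\in\mathbb{F}_q^3$ under $x\sim \alpha x$ for $\alpha\in\mathbb{F}_q\setminus\{0\}$; two distinct vertices $[x]$ and $[y]$ are adjacent if and only if $xy^T=0$. A vertex $[x]$ is called quadric if $xx^T=0$. $N_{B(q)}(v)$ denotes the set of neighbors of $v$ in $B(q)$. A graph is $k$-vertex-connected if between any two distinct vertices there are at least $k$ internally vertex-disjoint paths. *)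

From HB Require Import structures.
From mathcomp Require Import all_boot all_order all_algebra all_field.
Set Implicit Arguments. Unset Strict Implicit. Unset Printing Implicit Defensive.
Import GRing.Theory.
Local Open Scope ring_scope.

Section Brown.
Variable F : finFieldType.

(* a one-dimensional subspace of F^3, as a set of row vectors [x] = {a x | a in F} *)
Definition is_point (S : {set 'rV[F]_3}) : bool :=
  [exists x : 'rV[F]_3, (x != 0) && (S == [set a *: x | a : F])].

Definition point := {S : {set 'rV[F]_3} | is_point S}.

Definition bform (x y : 'rV[F]_3) : F := (x *m y^T) 0 0.

Definition brown_adj (u v : point) : bool :=
  (u != v) &&
  [exists x : 'rV[F]_3, exists y : 'rV[F]_3,
     [&& x \in val u, y \in val v, x != 0, y != 0 & bform x y == 0]].

Definition quadric (u : point) : bool :=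
  [exists x : 'rV[F]_3, [&& x \in val u, x != 0 & bform x x == 0]].

Definition nbhd (u : point) : {set point} := [set v | brown_adj u v].
End Brown.

Section Conn.
Variable V : finType.

(* p is the list of vertices after s; a path from s to t inside D *)
Definition is_path_in (D : {set V}) (e : rel V) (s t : V) (p : seq V) : bool :=
  [&& path e s p, last s p == t, uniq (s :: p) & all (mem D) (s :: p)].

(* internal vertices of the path s :: p (excluding both endpoints) *)
Definition internal (s : V) (p : seq V) : seq V := behead (belast s p).

Definition k_vertex_connected (D : {set V}) (e : rel V) (k : nat) : Prop :=
  forall s t, s \in D -> t \in D -> s != t ->
  exists ps : seq (seq V),
    [/\ k <= size ps, uniq ps,
        all (is_path_in D e s t) ps &
        forall i j, i < size ps -> j < size ps -> i != j ->
          [disjoint internal s (nth [::] ps i) & internal s (nth [::] ps j)]]%N.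
End Conn.

From HB Require Import structures.
From mathcomp Require Import all_boot all_order all_algebra all_field.
From mathcomp Require Import ring.
Set Implicit Arguments. Unset Strict Implicit. Unset Printing Implicit Defensive.

(* Only the polarity axioms of the projective plane are used: two distinct points
   have exactly one common perpendicular, every polar line has at least q points,
   and c is perpendicular to itself.  Given distinct vertices s, t other than c,
   pick a point p perpendicular to c, distinct from a, b, c, s, t and perpendicular
   to neither s nor t; each of s, t excludes at most one point of the polar line
   of c (here c being quadric matters), so such a p exists once q > 5.  For each
   point z of the polar line of p, with X z and Y z the common perpendiculars of
   z, s and of z, t, the walk s - X z - z - Y z - t is a path of B(q).  Distinct z
   give disjoint interiors, because p is the only common perpendicular of two
   points of its polar line.  The deleted edges form a matching, and no point of
   the polar line of p other than c lies in A or B; hence at most six of the at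
   least q choices of z fail, leaving q - 6 internally disjoint paths in H. *)

Lemma card_bigcup_seq_le1 (T : finType) (Es : seq {set T}) :
  all (fun E : {set T} => #|E| <= 1) Es -> #|\bigcup_(E <- Es) E| <= size Es.
Proof.
elim: Es => [|E Es IH] /= => [_ | /andP[E1 Es1]]; first by rewrite big_nil cards0.
by rewrite big_cons (leq_trans (leq_card_setU _ _)) // -add1n leq_add ?IH.
Qed.

Lemma disjoint_paths_of_family (V : finType) (D : {set V}) (e : rel V) (s t : V)
    (Z : {set V}) (f : V -> seq V) :
  {in Z, forall z, is_path_in D e s t (f z)} ->
  {in Z &, injective f} ->
  {in Z &, forall z1 z2, z1 != z2 ->
    [disjoint internal s (f z1) & internal s (f z2)]} ->
  exists ps : seq (seq V),
    [/\ #|Z| <= size ps, uniq ps, all (is_path_in D e s t) ps &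
        forall i j, i < size ps -> j < size ps -> i != j ->
          [disjoint internal s (nth [::] ps i) & internal s (nth [::] ps j)]].
Proof.
move=> fpath finj fdisj; exists [seq f z | z <- enum Z]; split.
- by rewrite size_map cardE.
- by rewrite map_inj_in_uniq ?enum_uniq // => z1 z2; rewrite !mem_enum; apply: finj.
- by apply/allP => _ /mapP[z zZ ->]; apply: fpath; rewrite -mem_enum.
- move=> i j; rewrite size_map => ilt jlt ij; rewrite !(nth_map s) //.
  by apply: fdisj; rewrite ?(nth_uniq s) ?enum_uniq // -mem_enum mem_nth.
Qed.

Section PolarGraph.
Variables (P : finType) (perp adj : rel P) (q : nat).
Hypothesis perpC : symmetric perp.
Hypothesis adjE : forall u v, adj u v = (u != v) && perp u v.
Hypothesis perp_exists : forall u v, u != v -> exists w, perp w u && perp w v.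
Hypothesis perp_uniq : forall u v w w', u != v ->
  perp w u -> perp w v -> perp w' u -> perp w' v -> w = w'.
Arguments perp_uniq [u v w w'].
Hypothesis card_perp : forall u, q <= #|[set w | perp u w]|.

Lemma common_perp_le1 u v : u != v -> #|[set w | perp w u && perp w v]| <= 1.
Proof.
move=> uv; apply/card_le1_eqP => w w'; rewrite !inE => /andP[wu wv] /andP[w'u w'v].
exact: esym (perp_uniq uv wu wv w'u w'v).
Qed.

Definition meet u v := odflt u [pick w | perp w u && perp w v].

Lemma meet_perp u v : u != v -> perp (meet u v) u && perp (meet u v) v.
Proof.
by move=> /perp_exists[w uvw]; rewrite /meet; case: pickP => [//|/(_ w)]; rewrite uvw.
Qed.

Lemma common_adj_eq x y u v w : ~~ perp x y -> adj x u -> adj y v -> adj y w ->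
  perp v u -> perp w u -> v = w.
Proof.
rewrite !adjE => nxy /andP[_ xu] /andP[_ yv] /andP[_ yw] vu wu.
have uy : u != y by apply: contraNneq nxy => <-.
by apply: (perp_uniq uy vu _ wu); rewrite perpC.
Qed.

Variables c a b : P.
Hypotheses (cc : perp c c) (ca : adj c a) (cb : adj c b).

Let A := [set v | adj a v] :\: [set v | adj b v].
Let B := [set v | adj b v] :\: [set v | adj a v].
Let M u v := ((u \in A) && (v \in B)) || ((u \in B) && (v \in A)).
Let eH u v := adj u v && ~~ M u v.

Lemma nperp_ab : ~~ perp a b.
Proof.
apply/negP => pab; move: cb ca; rewrite !adjE => /andP[/eqP cb' pcb] /andP[ca' pca].
by apply: cb'; apply: (perp_uniq _ pca cc); rewrite 1?eq_sym // perpC.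
Qed.

Lemma M_sym u v : M u v = M v u.
Proof. by rewrite /M orbC; congr (_ || _); apply: andbC. Qed.

Lemma M_matching u v w : perp v u -> perp w u -> M u v -> M u w -> v = w.
Proof.
have nba : ~~ perp b a by rewrite perpC nperp_ab.
move=> vu wu; rewrite /M !inE.
case/orP=> /andP[/andP[nu u'] /andP[_ v']] /orP[] /andP[/andP[_ u''] /andP[_ w']].
- exact: (common_adj_eq nperp_ab u' v' w').
- by rewrite u'' in nu.
- by rewrite u'' in nu.
- exact: (common_adj_eq nba u' v' w').
Qed.

Let near u := [set z | [&& perp c z, z != c & (z == u) || perp z u]].

Lemma card_near_le1 u : u != c -> #|near u| <= 1.
Proof.
move=> uc; apply/card_le1_eqP => z z'; rewrite !inE.
move=> /and3P[cz zc zu] /and3P[cz' z'c z'u].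
case: (boolP (perp c u)) => [cu | ncu].
  have eq_u y : perp c y -> y != c -> (y == u) || perp y u -> y = u.
    move=> cy yc /orP[/eqP // | yu]; case/eqP: yc.
    by apply: (perp_uniq uc yu _ cu cc); rewrite perpC.
  by rewrite (eq_u z cz zc zu) (eq_u z' cz' z'c z'u).
have perp_u y : perp c y -> (y == u) || perp y u -> perp y u.
  by move=> cy /orP[/eqP yu | //]; rewrite -yu cy in ncu.
by apply: (perp_uniq uc (perp_u z' cz' z'u) _ (perp_u z cz zu)); rewrite perpC.
Qed.

Lemma exists_pole s t : s != c -> t != c -> 5 < q ->
  exists p, [/\ perp c p, p \notin [:: a; b; c; s; t], ~~ perp p s & ~~ perp p t].
Proof.
move=> sc tc q5.
pose bad := \bigcup_(E <- [:: [set a]; [set b]; [set c]; near s; near t]) E.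
have /subsetPn[p] : ~~ ([set z | perp c z] \subset bad).
  apply: contraTN q5 => /subset_leq_card cbad; rewrite -leqNgt.
  apply: leq_trans (card_perp c) (leq_trans cbad _); apply: card_bigcup_seq_le1.
  by rewrite /= !cards1 !card_near_le1.
rewrite inE => cp; rewrite /bad !big_cons big_nil !inE cp /=.
rewrite orbF !negb_or => /and5P[pa pb pc]; rewrite pc /= !negb_or.
by move=> /andP[ps nps] /andP[pt npt]; exists p; rewrite !inE !negb_or pa pb pc ps pt.
Qed.

Section Pole.
Variables s t p : P.
Hypotheses (st : s != t) (sc : s != c) (tc : t != c).
Hypotheses (cp : perp c p) (pa : p != a) (pb : p != b) (pc : p != c).
Hypotheses (ps : p != s) (pt : p != t) (nps : ~~ perp p s) (npt : ~~ perp p t).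

Let X z := meet z s.
Let Y z := meet z t.

Lemma pole_line_neq_s z : perp p z -> z != s.
Proof. by move=> pz; apply: contraNneq nps => <-. Qed.

Lemma pole_line_neq_t z : perp p z -> z != t.
Proof. by move=> pz; apply: contraNneq npt => <-. Qed.

Lemma meet_s_perp z : perp p z -> perp (X z) z && perp (X z) s.
Proof. by move/pole_line_neq_s/meet_perp. Qed.

Lemma meet_t_perp z : perp p z -> perp (Y z) z && perp (Y z) t.
Proof. by move/pole_line_neq_t/meet_perp. Qed.

(* Two distinct points of the polar line of [p] have [p] as their only common
   perpendicular. *)
Lemma pole_line_eq z z' v : perp p z -> perp p z' -> perp v z -> perp v z' ->
  perp v s || perp v t -> z = z'.
Proof.
move=> pz pz' vz vz'; case: (eqVneq z z') => // zz'.
by rewrite (perp_uniq zz' vz vz' pz pz') (negbTE nps) (negbTE npt).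
Qed.

Lemma X_inj z z' : perp p z -> perp p z' -> X z = X z' -> z = z'.
Proof.
move=> pz pz' e; have /andP[xz xs] := meet_s_perp pz; have /andP[xz' _] := meet_s_perp pz'.
by apply: (pole_line_eq pz pz' xz); rewrite ?xs ?e.
Qed.

Lemma Y_inj z z' : perp p z -> perp p z' -> Y z = Y z' -> z = z'.
Proof.
move=> pz pz' e; have /andP[yz yt] := meet_t_perp pz; have /andP[yz' _] := meet_t_perp pz'.
by apply: (pole_line_eq pz pz' yz); rewrite ?yt ?orbT ?e.
Qed.

Lemma XY_inj z z' : perp p z -> perp p z' -> X z = Y z' -> z = z'.
Proof.
move=> pz pz' e; have /andP[xz xs] := meet_s_perp pz; have /andP[yz' _] := meet_t_perp pz'.
by apply: (pole_line_eq pz pz' xz); rewrite ?xs ?e.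
Qed.

Lemma pole_line_perp_c z : perp p z -> perp z c -> z = c.
Proof. by move=> pz zc; apply: (perp_uniq pc _ zc cp cc); rewrite perpC. Qed.

Lemma pole_line_notin_AB z : perp p z -> z != c -> (z \notin A) && (z \notin B).
Proof.
move=> pz; apply: contraR; rewrite negb_and !negbK !inE !adjE => zAB.
have [x [px cx xz]] : exists x, [/\ p != x, perp c x & perp z x].
  move: ca cb; rewrite !adjE => /andP[_ pca] /andP[_ pcb].
  by case/orP: zAB => /andP[_ /andP[_ xz]]; [exists a | exists b]; split; rewrite // perpC.
by apply/eqP; apply: (perp_uniq px _ xz cp cx); rewrite perpC.
Qed.

Definition detour z := [:: X z; z; Y z; t].

Definition good_detour z := [&& perp p z, ~~ perp z s, ~~ perp z t, X z != Y z,
  z != c, ~~ M s (X z) & ~~ M t (Y z)].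

Lemma card_pole_line : #|[set z | perp p z]| <= #|[set z | good_detour z]| + 6.
Proof.
pose Es := [:: [set z | perp z p && perp z s]; [set z | perp z p && perp z t];
  [set z | perp p z && (X z == Y z)]; [set c];
  [set z | perp p z && M s (X z)]; [set z | perp p z && M t (Y z)]].
have Es1 : all (fun E : {set P} => #|E| <= 1) Es.
  rewrite /= cards1 !common_perp_le1 //= andbT; apply/and3P; split; apply/card_le1_eqP.
  - move=> z z'; rewrite !inE => /andP[pz /eqP e] /andP[pz' /eqP e'].
    have /andP[_ xs] := meet_s_perp pz; have /andP[_ yt] := meet_t_perp pz.
    have /andP[_ xs'] := meet_s_perp pz'; have /andP[_ yt'] := meet_t_perp pz'.
    by apply: (X_inj pz' pz); apply: (perp_uniq st xs' _ xs); rewrite ?e ?e'.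
  - move=> z z'; rewrite !inE => /andP[pz m] /andP[pz' m'].
    have /andP[_ xs] := meet_s_perp pz; have /andP[_ xs'] := meet_s_perp pz'.
    exact: (X_inj pz' pz (M_matching xs' xs m' m)).
  - move=> z z'; rewrite !inE => /andP[pz m] /andP[pz' m'].
    have /andP[_ yt] := meet_t_perp pz; have /andP[_ yt'] := meet_t_perp pz'.
    exact: (Y_inj pz' pz (M_matching yt' yt m' m)).
have cover : [set z | perp p z] \subset [set z | good_detour z] :|: \bigcup_(E <- Es) E.
  apply/subsetP => z; rewrite /Es !big_cons big_nil !inE /good_detour => pz.
  by rewrite [perp z p]perpC pz /= -!negb_or orbF orNb.
apply: leq_trans (subset_leq_card cover) _.
by rewrite (leq_trans (leq_card_setU _ _)) // leq_add2l (card_bigcup_seq_le1 Es1).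
Qed.

Lemma detour_path z : good_detour z -> is_path_in [set~ c] eH s t (detour z).
Proof.
case/and5P=> pz nzs nzt xy /and3P[zc nMs nMt].
have /andP[xz xs] := meet_s_perp pz; have /andP[yz yt] := meet_t_perp pz.
have /andP[zA zB] := pole_line_notin_AB pz zc.
have perp_z_neq v : perp v z -> (v != s) && (v != t).
  move=> vz; apply/andP; split; [apply: contraNneq nzs | apply: contraNneq nzt];
    by move=> e; rewrite -e perpC.
have /andP[xs' xt'] := perp_z_neq _ xz; have /andP[ys' yt'] := perp_z_neq _ yz.
have xz' : X z != z by apply: contraNneq nzs => e; rewrite -{1}e.
have yz' : Y z != z by apply: contraNneq nzt => e; rewrite -{1}e.
have xc : X z != c.
  by apply: contraNneq zc => e; apply/eqP/pole_line_perp_c; rewrite // -e perpC.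
have yc : Y z != c.
  by apply: contraNneq zc => e; apply/eqP/pole_line_perp_c; rewrite // -e perpC.
have nMxz : ~~ M (X z) z by rewrite /M (negbTE zA) (negbTE zB) !andbF.
have nMzy : ~~ M z (Y z) by rewrite /M (negbTE zA) (negbTE zB).
have nMyt : ~~ M (Y z) t by rewrite M_sym.
rewrite /is_path_in /detour /= /eH !adjE nMs nMxz nMzy nMyt.
rewrite !in_cons !in_nil !in_setC1 !orbF !negb_or eqxx.
have zs := pole_line_neq_s pz; have zt := pole_line_neq_t pz.
by repeat (apply/andP; split) => //; rewrite 1?eq_sym 1?perpC.
Qed.

Lemma detour_disjoint z z' : good_detour z -> good_detour z' -> z != z' ->
  [disjoint internal s (detour z) & internal s (detour z')].
Proof.
move=> /and4P[pz nzs nzt _] /and4P[pz' nzs' nzt' _] zz'.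
have /andP[_ xs] := meet_s_perp pz; have /andP[_ yt] := meet_t_perp pz.
have /andP[_ xs'] := meet_s_perp pz'; have /andP[_ yt'] := meet_t_perp pz'.
have neq_perp x y w : perp x w -> ~~ perp y w -> x != y by move=> xw; apply: contraNneq => <-.
rewrite /internal /detour /= disjoint_has /= !inE !negb_or andbT.
apply/and3P; split; apply/and3P; split => //.
- exact: contra_neq (X_inj pz pz') zz'.
- exact: neq_perp _ _ _ xs nzs'.
- exact: contra_neq (XY_inj pz pz') zz'.
- by rewrite eq_sym (neq_perp _ _ _ xs' nzs).
- by rewrite eq_sym (neq_perp _ _ _ yt' nzt).
- by rewrite eq_sym (contra_neq (XY_inj pz' pz)) // eq_sym.
- exact: neq_perp _ _ _ yt nzt'.
- exact: contra_neq (Y_inj pz pz') zz'.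
Qed.

End Pole.

Theorem polar_graph_vertex_connected : k_vertex_connected [set~ c] eH (q - 6).
Proof.
move=> s t; rewrite !in_setC1 => sc tc st.
have [q6 | q7] := leqP q 6; first by exists [::]; split; rewrite // leqn0 subn_eq0.
have [p [cp p_fresh nps npt]] := exists_pole sc tc (ltnW q7).
move: p_fresh; rewrite !inE !negb_or => /and5P[pa pb pc ps pt].
have [|||paths [Zpaths uniq_paths all_paths disj_paths]] :=
  @disjoint_paths_of_family _ [set~ c] eH s t [set z | good_detour s t p z] (detour s t).
- by move=> z; rewrite inE => zZ; apply: (detour_path (p := p)).
- by move=> z1 z2 _ _ [].
- by move=> z1 z2; rewrite !inE => z1Z z2Z; apply: (detour_disjoint (p := p)).
exists paths; split => //; apply: leq_trans Zpaths; rewrite leq_subLR addnC.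
exact: leq_trans (card_perp p) (card_pole_line st ps pt nps npt).
Qed.

End PolarGraph.

Section BrownPolarity.
Import GRing.Theory.
Local Open Scope ring_scope.
Variable F : finFieldType.
Implicit Types (u v w : point F) (x y z : 'rV[F]_3).

Local Notation i0 := (@Ordinal 3 0 isT).
Local Notation i1 := (@Ordinal 3 1 isT).
Local Notation i2 := (@Ordinal 3 2 isT).

Lemma rv3P x y : x 0 i0 = y 0 i0 -> x 0 i1 = y 0 i1 -> x 0 i2 = y 0 i2 -> x = y.
Proof.
move=> e0 e1 e2; apply/rowP => -[[|[|[|//]]] lt_i3].
- by rewrite (_ : Ordinal lt_i3 = i0) //; apply: val_inj.
- by rewrite (_ : Ordinal lt_i3 = i1) //; apply: val_inj.
- by rewrite (_ : Ordinal lt_i3 = i2) //; apply: val_inj.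
Qed.

Lemma rv3_neq0 x : x != 0 -> [\/ x 0 i0 != 0, x 0 i1 != 0 | x 0 i2 != 0].
Proof.
move=> x0; apply/or3P; apply: contraR x0; rewrite !negb_or !negbK.
by case/and3P=> /eqP e0 /eqP e1 /eqP e2; apply/eqP; apply: rv3P; rewrite ?mxE.
Qed.

Lemma bformE x y : bform x y = x 0 i0 * y 0 i0 + x 0 i1 * y 0 i1 + x 0 i2 * y 0 i2.
Proof.
rewrite /bform !mxE !big_ord_recl big_ord0 addr0 !mxE addrA.
by congr (_ * _ + _ * _ + _ * _); congr (_ _ _); apply: val_inj.
Qed.

Lemma bformC x y : bform x y = bform y x.
Proof. by rewrite !bformE; ring. Qed.

Lemma bformZl a x y : bform (a *: x) y = a * bform x y.
Proof. by rewrite !bformE !mxE; ring. Qed.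

Lemma bformZr a x y : bform x (a *: y) = a * bform x y.
Proof. by rewrite bformC bformZl bformC. Qed.

Lemma bformDZr x y z l : bform z (x + l *: y) = bform z x + l * bform z y.
Proof. by rewrite !bformE !mxE; ring. Qed.

Definition vec3 (e0 e1 e2 : F) : 'rV[F]_3 := \row_j [:: e0; e1; e2]`_j.

Definition cross x y := vec3 (x 0 i1 * y 0 i2 - x 0 i2 * y 0 i1)
  (x 0 i2 * y 0 i0 - x 0 i0 * y 0 i2) (x 0 i0 * y 0 i1 - x 0 i1 * y 0 i0).

Lemma crossZ a b x y : cross (a *: x) (b *: y) = (a * b) *: cross x y.
Proof. by apply: rv3P; rewrite !mxE /=; ring. Qed.

Lemma cross_self x : cross x x = 0.
Proof. by apply: rv3P; rewrite !mxE /=; ring. Qed.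

Lemma cross0l y : cross 0 y = 0.
Proof. by apply: rv3P; rewrite !mxE /=; ring. Qed.

Lemma cross_line x y l m : cross (x + l *: y) (x + m *: y) = (m - l) *: cross x y.
Proof. by apply: rv3P; rewrite !mxE /=; ring. Qed.

Lemma crossDZr x y l : cross (x + l *: y) y = cross x y.
Proof. by apply: rv3P; rewrite !mxE /=; ring. Qed.

Lemma cross_cross x y z : cross x (cross y z) = bform x z *: y - bform x y *: z.
Proof. by apply: rv3P; rewrite !bformE !mxE /=; ring. Qed.

Lemma bform_crossl x y : bform (cross x y) x = 0.
Proof. by rewrite bformE !mxE /=; ring. Qed.

Lemma bform_crossr x y : bform (cross x y) y = 0.
Proof. by rewrite bformE !mxE /=; ring. Qed.

Lemma cross_eq0 x y : y != 0 -> cross x y = 0 -> exists l, x = l *: y.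
Proof.
move=> y0 /rowP xy.
have := xy i0; have := xy i1; have := xy i2; rewrite !mxE /=.
move=> /eqP; rewrite subr_eq0 => /eqP e2 /eqP; rewrite subr_eq0 => /eqP e1.
move=> /eqP; rewrite subr_eq0 => /eqP e0.
case/rv3_neq0: y0 => yi;
  [exists (x 0 i0 / y 0 i0) | exists (x 0 i1 / y 0 i1) | exists (x 0 i2 / y 0 i2)];
  by apply: rv3P; rewrite !mxE; apply: (mulIf yi); rewrite mulrAC divfK // ?(e0, e1, e2).
Qed.

Lemma perp_plane n : n != 0 ->
  exists x y, [/\ bform n x = 0, bform n y = 0 & cross x y != 0].
Proof.
move=> n0; case/rv3_neq0: (n0) => ni.
- exists (vec3 (- n 0 i1) (n 0 i0) 0), (vec3 (- n 0 i2) 0 (n 0 i0)).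
  have -> : cross (vec3 (- n 0 i1) (n 0 i0) 0) (vec3 (- n 0 i2) 0 (n 0 i0)) = n 0 i0 *: n.
    by apply: rv3P; rewrite !mxE /=; ring.
  by split; [rewrite bformE !mxE /=; ring.. | rewrite scaler_eq0 negb_or ni n0].
- exists (vec3 (n 0 i1) (- n 0 i0) 0), (vec3 0 (- n 0 i2) (n 0 i1)).
  have -> : cross (vec3 (n 0 i1) (- n 0 i0) 0) (vec3 0 (- n 0 i2) (n 0 i1)) = - n 0 i1 *: n.
    by apply: rv3P; rewrite !mxE /=; ring.
  by split; [rewrite bformE !mxE /=; ring.. | rewrite scaler_eq0 oppr_eq0 negb_or ni n0].
- exists (vec3 (n 0 i2) 0 (- n 0 i0)), (vec3 0 (n 0 i2) (- n 0 i1)).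
  have -> : cross (vec3 (n 0 i2) 0 (- n 0 i0)) (vec3 0 (n 0 i2) (- n 0 i1)) = n 0 i2 *: n.
    by apply: rv3P; rewrite !mxE /=; ring.
  by split; [rewrite bformE !mxE /=; ring.. | rewrite scaler_eq0 negb_or ni n0].
Qed.

Definition rep u : 'rV[F]_3 := xchoose (existsP (valP u)).

Lemma rep_spec u : (rep u != 0) && (val u == [set a *: rep u | a : F]).
Proof. exact: xchooseP (existsP (valP u)). Qed.

Lemma rep_neq0 u : rep u != 0.
Proof. by case/andP: (rep_spec u). Qed.

Lemma mem_pointP u x : reflect (exists a, x = a *: rep u) (x \in val u).
Proof.
case/andP: (rep_spec u) => _ /eqP ->.
by apply: (iffP imsetP) => [[a _ ->] | [a ->]]; exists a.
Qed.

Lemma rep_mem u : rep u \in val u.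
Proof. by apply/mem_pointP; exists 1; rewrite scale1r. Qed.

Lemma mem_point_neq0 u x : x \in val u -> x != 0 -> exists2 a, a != 0 & x = a *: rep u.
Proof.
case/mem_pointP=> a -> ax0; exists a => //.
by apply: contraNneq ax0 => ->; rewrite scale0r.
Qed.

Lemma point_eqE u v x y : x \in val u -> x != 0 -> y \in val v -> y != 0 ->
  (u == v) = (cross x y == 0).
Proof.
move=> ux x0 vy y0.
have [a a0 ->] := mem_point_neq0 ux x0; have [b b0 ->] := mem_point_neq0 vy y0.
rewrite crossZ scaler_eq0 mulf_eq0 (negbTE a0) (negbTE b0) /=.
apply/eqP/eqP => [-> | /(cross_eq0 (rep_neq0 v))[l el]]; first exact: cross_self.
have l0 : l != 0 by apply: contraNneq (rep_neq0 u) => l0; rewrite el l0 scale0r.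
apply/val_inj/setP => z; apply/mem_pointP/mem_pointP => -[c ->].
  by exists (c * l); rewrite el scalerA.
by exists (c / l); rewrite el scalerA divfK.
Qed.

Definition perp u v := bform (rep u) (rep v) == 0.

Lemma perpE u v x y : x \in val u -> x != 0 -> y \in val v -> y != 0 ->
  perp u v = (bform x y == 0).
Proof.
move=> ux x0 vy y0.
have [a a0 ->] := mem_point_neq0 ux x0; have [b b0 ->] := mem_point_neq0 vy y0.
by rewrite bformZl bformZr !mulf_eq0 (negbTE a0) (negbTE b0).
Qed.

Lemma perpC : symmetric perp.
Proof. by move=> u v; rewrite /perp bformC. Qed.

(* [d] is only a default, returned when [x = 0]. *)
Definition point_of (d : point F) x : point F := insubd d [set a *: x | a : F].

Lemma point_of_mem d x : x != 0 -> x \in val (point_of d x).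
Proof.
move=> x0; rewrite val_insubd ifT; first by apply/imsetP; exists 1; rewrite ?scale1r.
by apply/existsP; exists x; rewrite x0 eqxx.
Qed.

Lemma brown_adjE u v : brown_adj u v = (u != v) && perp u v.
Proof.
congr (_ && _); apply/existsP/idP => [[x /existsP[y]] | uv].
  by case/and5P=> ux vy x0 y0; rewrite (perpE ux x0 vy y0).
by exists (rep u); apply/existsP; exists (rep v); rewrite !rep_mem !rep_neq0.
Qed.

Lemma quadricE u : quadric u = perp u u.
Proof.
apply/existsP/idP => [[x /and3P[ux x0]] | uu]; first by rewrite (perpE ux x0 ux x0).
by exists (rep u); rewrite rep_mem rep_neq0.
Qed.

Lemma cross_rep_neq0 u v : u != v -> cross (rep u) (rep v) != 0.
Proof. by rewrite (point_eqE (rep_mem u) (rep_neq0 u) (rep_mem v) (rep_neq0 v)). Qed.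

Lemma perp_exists u v : u != v -> exists w, perp w u && perp w v.
Proof.
move/cross_rep_neq0=> n0; exists (point_of u (cross (rep u) (rep v))).
have wn := point_of_mem u n0.
rewrite (perpE wn n0 (rep_mem u) (rep_neq0 u)) (perpE wn n0 (rep_mem v) (rep_neq0 v)).
by rewrite bform_crossl bform_crossr eqxx.
Qed.

Lemma perp_uniq u v w w' : u != v ->
  perp w u -> perp w v -> perp w' u -> perp w' v -> w = w'.
Proof.
move/cross_rep_neq0=> n0.
have normal (r : point F) :
  perp r u -> perp r v -> exists l, rep r = l *: cross (rep u) (rep v).
  move=> /eqP ru /eqP rv; apply: cross_eq0 n0 _.
  by rewrite cross_cross ru rv !scale0r subr0.
move=> wu wv w'u w'v; have [l el] := normal w wu wv; have [m em] := normal w' w'u w'v.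
apply/eqP; rewrite (point_eqE (rep_mem w) (rep_neq0 w) (rep_mem w') (rep_neq0 w')).
by rewrite el em crossZ cross_self scaler0.
Qed.

Lemma card_perp u : (#|F| <= #|[set w | perp u w]|)%N.
Proof.
have [x [y [ux uy xy]]] := perp_plane (rep_neq0 u).
have line_neq0 l : x + l *: y != 0.
  by apply: contraNneq xy => e; rewrite -(crossDZr x y l) e cross0l.
pose f l := point_of u (x + l *: y).
have f_mem l : x + l *: y \in val (f l) := point_of_mem u (line_neq0 l).
have f_inj : injective f.
  move=> l m flm; apply/eqP; rewrite eq_sym -subr_eq0.
  have := point_eqE (f_mem l) (line_neq0 l) (f_mem m) (line_neq0 m).
  by rewrite flm eqxx cross_line scaler_eq0 (negbTE xy) orbF.
rewrite -cardsT -(card_imset _ f_inj); apply/subset_leq_card/subsetP => _ /imsetP[l _ ->].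
rewrite inE (perpE (rep_mem u) (rep_neq0 u) (f_mem l) (line_neq0 l)).
by rewrite bformDZr ux uy mulr0 addr0.
Qed.

End BrownPolarity.

Theorem lemma1 (F : finFieldType) (q_odd : odd #|F|)
  (c a b : point F) (hc : quadric c)
  (ha : a \in nbhd c) (hb : b \in nbhd c) (hab : a != b) :
  let A := nbhd a :\: nbhd b in
  let B := nbhd b :\: nbhd a in
  let eH := fun u v : point F =>
    brown_adj u v && ~~ (((u \in A) && (v \in B)) || ((u \in B) && (v \in A))) in
  k_vertex_connected [set~ c] eH (#|F| - 6).
Proof.
rewrite quadricE in hc; rewrite !inE in ha hb.
exact: (polar_graph_vertex_connected (@perpC F) (@brown_adjE F) (@perp_exists F)
  (@perp_uniq F) (@card_perp F) hc ha hb).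
Qed.
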